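(* Consider the $N$-node uplink system described in the context with weights $\omega_i>0$, arrival rates $\lambda_i\in(0,1]$ and success probabilities $p_i\in(0,1]$, and let $\lambda_{\min}=\min_i\lambda_i$. Let $(q^*_1,\dots,q^*_N)$ be an optimal solution of $$\min_{q_1,\dots,q_N>0}\ \frac{1}{2N}\sum_{i=1}^N\omega_i\left(\frac1{q_i}+3\right)\quad\text{s.t.}\quad\sum_{i=1}^N\frac{q_i}{p_i}\le1,\quad q_i\le\lambda_i\ \ \forall i,$$ and let $L_B=\frac{1}{2N}\sum_{i=1}^N\omega_i\left(\frac1{q^*_i}+3\right)$ be its optimal value. Let $R^{POMW}$ be the long-term expected weighted sum AoI of the POMW policy with parameters $\beta_i=\omega_i/(\lambda_iq^*_i)$. Then $$\frac{R^{POMW}}{L_B}<\frac{2}{\lambda_{\min}}.$$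
   Context: System: $N$ nodes $i=1,\dots,N$ and one access point (AP); time slots $t=0,1,2,\dots$. Node $i$ receives a status update in each slot independently with probability $\lambda_i$ (independent across nodes and slots) and keeps only the latest one. Local age: $d_{t+1,i}=1$ if an update arrives at node $i$ in slot $t$, else $d_{t+1,i}=d_{t,i}+1$. In each slot the AP schedules at most one node; a scheduled node $i$'s transmission succeeds with probability $p_i$ independently. If node $i$ is scheduled and succeeds in slot $t$, the AP observes $d_{t,i}$ and $D_{t+1,i}=d_{t,i}+1$; otherwise the AP observes nothing about $d_{t,i}$ and $D_{t+1,i}=D_{t,i}+1$. Initialization: $d_{0,i}=D_{0,i}=1$ for all $i$. Belief: $b_{t,i}(d)=\Pr(d_{t,i}=d\mid\text{AP history up to slot }t-1)$. POMW policy with parameters $\beta_i>0$: in each slot $t$ the AP computes $G_{t,i}=D_{t,i}-\sum_{d\ge1}b_{t,i}(d)\,d$ for every $i$ and schedules a node $j\in\arg\max_i\beta_ip_iG_{t,i}$. The long-term expected weighted sum AoI of a policy $\pi$ is $\lim_{T\to\infty}\frac{1}{NT}\mathbb{E}\left[\sum_{t=1}^T\sum_{i=1}^N\omega_iD_{t,i}\,\middle|\,\pi\right]$. *)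

From HB Require Import structures.
From mathcomp Require Import all_boot all_order all_algebra.
From mathcomp Require Import reals.
Set Implicit Arguments. Unset Strict Implicit. Unset Printing Implicit Defensive.
Import Order.TTheory GRing.Theory Num.Theory.
Local Open Scope ring_scope.

(* Probability model.  The randomness of one slot is, for every node i, an    *)
(* arrival bit (prob. lam i) and a transmission-success bit (prob. p i), all *)
(* independent; the success bit of node i is only used if i is scheduled.    *)
(* Events depending on slots 0..t-1 are evaluated on the finite space of     *)
(* t-tuples of slot outcomes with the product weight.                        *)
Section Model.
Variables (R : realType) (N : nat) (lam p : 'I_N -> R).

Definition slotT := {ffun 'I_N -> bool * bool}.  (* (arrival, success) *)
Definition slot0 : slotT := [ffun=> (false, false)].

Definition slot_w (x : slotT) : R :=
  \prod_(i < N) ((if (x i).1 then lam i else 1 - lam i) *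
                 (if (x i).2 then p i else 1 - p i)).

Definition path_w (s : seq slotT) : R := \prod_(x <- s) slot_w x.

(* local age d_{t,i} after the slots s = (slot 0, ..., slot t-1); d_0 = 1 *)
Definition loc_age (s : seq slotT) (i : 'I_N) : nat :=
  foldl (fun d (x : slotT) => if (x i).1 then 1%N else d.+1) 1%N s.

(* AP observation in one slot: (scheduled node, success, observed local age
   (0 = nothing observed, when the transmission failed)) *)
Definition obsT := ('I_N * bool * nat)%type.

(* AP age D_{t,i} from the AP history of slots 0..t-1; D_0 = 1 *)
Definition ap_age (h : seq obsT) (i : 'I_N) : nat :=
  foldl (fun D (o : obsT) => if (o.1.1 == i) && o.1.2 then o.2.+1 else D.+1)
        1%N h.

(* belief b_{t,i}(d) = Pr(d_{t,i} = d | AP history of slots 0..t-1 = h),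
   where H maps the first t slot outcomes to the AP history they produce *)
Definition belief (H : seq slotT -> seq obsT) (t : nat) (h : seq obsT)
  (i : 'I_N) (d : nat) : R :=
  (\sum_(s : t.-tuple slotT | H s == h) path_w s * (loc_age s i == d)%:R) /
  (\sum_(s : t.-tuple slotT | H s == h) path_w s).

(* sum_{d >= 1} b_{t,i}(d) d ; the belief is supported on 1 <= d <= t+1 *)
Definition belief_mean (H : seq slotT -> seq obsT) (t : nat) (h : seq obsT)
  (i : 'I_N) : R :=
  \sum_(1 <= d < t.+2) belief H t h i d * d%:R.

Variables (beta : 'I_N -> R) (tb : nat -> seq obsT -> ('I_N -> R) -> 'I_N).

(* POMW decision in slot t given the AP history h of slots 0..t-1;
   tb t h f is the (deterministic) tie-breaking choice of an argmax of f *)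
Definition pomw_index (H : seq slotT -> seq obsT) (t : nat) (h : seq obsT)
  (i : 'I_N) : R :=
  beta i * p i * ((ap_age h i)%:R - belief_mean H t h i).

Definition pomw_decide (H : seq slotT -> seq obsT) (t : nat) (h : seq obsT)
  : 'I_N := tb t h (pomw_index H t h).

(* AP history of slots 0..t-1 under POMW, as function of the slot outcomes *)
Fixpoint hist (t : nat) : seq slotT -> seq obsT :=
  match t with
  | 0 => fun _ => [::]
  | t'.+1 => fun s =>
      let h := hist t' (take t' s) in
      let j := pomw_decide (hist t') t' h in
      let x := nth slot0 s t' in
      let ok := (x j).2 in
      rcons h (j, ok, if ok then loc_age (take t' s) j else 0%N)
  end.

Definition pomw_cost (omega : 'I_N -> R) (T : nat) : R :=
  \sum_(s : T.-tuple slotT) path_w s *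
    \sum_(1 <= t < T.+1) \sum_(i < N) omega i * (ap_age (hist t (take t s)) i)%:R.

Definition pomw_avg (omega : 'I_N -> R) (T : nat) : R :=
  pomw_cost omega T / (N%:R * T%:R).

End Model.

Definition lb_obj {R : realType} {N : nat} (omega q : 'I_N -> R) : R :=
  (2 * N%:R)^-1 * \sum_(i < N) omega i * ((q i)^-1 + 3).

Definition lb_feasible {R : realType} {N : nat} (lam p q : 'I_N -> R) : Prop :=
  (forall i, 0 < q i) /\ \sum_(i < N) q i / p i <= 1 /\ (forall i, q i <= lam i).

(* lambda_min = min_i lam_i (the seed 1 is harmless since all lam_i <= 1) *)
Definition lam_min {R : realType} {N : nat} (lam : 'I_N -> R) : R :=
  \big[Num.min/1]_(i < N) lam i.

(* POMW is analysed with the Lyapunov function V_t = sum_i beta_i D_{t,i}.  In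
   one slot V drops in expectation by the POMW index of the scheduled node and
   grows by sum_i beta_i.  By the tower property the index
   beta_i p_i (D_i - E[d_i | AP history]) has the same expectation as
   beta_i p_i (D_i - d_i), and POMW schedules a maximal index; averaging the
   indices with the weights q_i / p_i (which sum to at most 1) and using
   (q_i / p_i) beta_i p_i = omega_i / lambda_i bounds
   sum_i omega_i / lambda_i E[D_i - d_i] by the expected drop of V.  Together
   with E[d_i] <= 1 / lambda_i and telescoping, the time-average cost is at
   most (sum_i beta_i + sum_i omega_i / lambda_i) / N + O(1/T), and
   beta_i <= omega_i / (lambda_min q_i), omega_i / lambda_i <= omega_i / lambda_min
   compare this with (2 / lambda_min) L_B. *)

From HB Require Import structures.
From mathcomp Require Import all_boot all_order all_algebra.
From mathcomp Require Import reals.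
From mathcomp Require Import ring lra.
Set Implicit Arguments. Unset Strict Implicit. Unset Printing Implicit Defensive.
Import Order.TTheory GRing.Theory Num.Theory.
Local Open Scope ring_scope.

Lemma sum_tuple_rcons (T : finType) (V : nmodType) t (F : seq T -> V) :
  \sum_(u : t.+1.-tuple T) F u = \sum_(s : t.-tuple T) \sum_(x : T) F (rcons s x).
Proof.
rewrite pair_bigA /=.
pose snoc (sx : t.-tuple T * T) := [tuple of rcons sx.1 sx.2].
pose unsnoc (u : t.+1.-tuple T) :=
  ([tuple of belast (thead u) (behead_tuple u)], last (thead u) (behead u)).
have tupleI (u : t.+1.-tuple T) : thead u :: behead u = u.
  by rewrite {3}(tuple_eta u).
rewrite (reindex snoc) //; exists unsnoc => [[s x] _ | u _]; last first.
  by apply: val_inj; rewrite /= -lastI tupleI.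
have /rcons_inj[Es Ex] :
    rcons s x = rcons (belast (thead (snoc (s, x))) (behead (snoc (s, x))))
                      (last (thead (snoc (s, x))) (behead (snoc (s, x)))).
  by rewrite -lastI tupleI.
rewrite /unsnoc; congr pair; last by rewrite -Ex.
by apply: val_inj; rewrite /= -Es.
Qed.

Lemma psumr_gt0 (R : numDomainType) (I : finType) (i0 : I) (F : I -> R) :
  (forall i, 0 < F i) -> 0 < \sum_i F i.
Proof.
move=> F_gt0; rewrite (bigD1 i0) //= ltr_pwDl //.
by apply: sumr_ge0 => i _; apply: ltW.
Qed.

Lemma ler_subconvex_sum (R : numDomainType) (I : finType) (c a : I -> R) (M : R) :
  (forall k, 0 <= c k) -> \sum_k c k <= 1 -> 0 <= M -> (forall k, a k <= M) ->
  \sum_k c k * a k <= M.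
Proof.
move=> c_ge0 c_sum M_ge0 a_le; apply: le_trans (_ : \sum_k c k * M <= M).
  by apply: ler_sum => k _; rewrite ler_wpM2l.
by rewrite -mulr_suml ler_piMl.
Qed.

Section ConditionalMean.
Variables (R : realFieldType) (T : finType) (K : eqType) (w : T -> R) (f : T -> K).
Hypothesis w_ge0 : forall x, 0 <= w x.

Definition cond_mean (g : T -> R) (k : K) : R :=
  (\sum_(x | f x == k) w x * g x) / \sum_(x | f x == k) w x.

Lemma sum_cond_mean (phi : K -> R) (g : T -> R) :
  \sum_x w x * (phi (f x) * cond_mean g (f x)) = \sum_x w x * (phi (f x) * g x).
Proof.
pose W k := \sum_(x | f x == k) w x.
have fibreE y : \sum_x (if f y == f x then w x * (phi (f x) * (w y * g y / W (f x))) else 0)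
                = w y * (phi (f y) * g y).
  rewrite -big_mkcond /= (eq_bigl (fun x => f x == f y)) => [|x]; last exact: eq_sym.
  rewrite (eq_bigr (fun x => w x * (phi (f y) * (w y * g y / W (f y))))) => [|x /eqP-> //].
  rewrite -mulr_suml -/(W (f y)).
  have [W0 | Wn0] := eqVneq (W (f y)) 0; last by field.
  (* a null fibre: its mean is the junk value 0, and w y = 0 kills the right side *)
  suff -> : w y = 0 by rewrite W0 !(mul0r, mulr0).
  by apply/eqP; rewrite eq_le w_ge0 -W0 /W (bigD1 y) //= lerDl sumr_ge0.
rewrite -(eq_bigr _ (fun y _ => fibreE y)) exchange_big /=.
apply: eq_bigr => x _; rewrite /cond_mean big_mkcond mulr_suml !mulr_sumr.
by apply: eq_bigr => y _; case: ifP; rewrite ?(mul0r, mulr0).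
Qed.
End ConditionalMean.

Section SlotProbability.
Variables (R : realType) (N : nat) (lam p : 'I_N -> R).
Hypothesis lam01 : forall i, 0 <= lam i <= 1.
Hypothesis p01 : forall i, 0 <= p i <= 1.

Definition node_w (i : 'I_N) (b : bool * bool) : R :=
  (if b.1 then lam i else 1 - lam i) * (if b.2 then p i else 1 - p i).

Lemma node_w_ge0 i b : 0 <= node_w i b.
Proof.
have /andP[lam0 lam1] := lam01 i; have /andP[p0 p1] := p01 i.
by case: b => [[] []]; apply: mulr_ge0; rewrite /= ?subr_ge0.
Qed.

Lemma sum_node_w i (f : bool * bool -> R) :
  \sum_(b : bool * bool) node_w i b * f b =
    lam i * p i * f (true, true) + lam i * (1 - p i) * f (true, false)
    + (1 - lam i) * p i * f (false, true)
    + (1 - lam i) * (1 - p i) * f (false, false).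
Proof.
rewrite (eq_bigr (fun b => node_w i (b.1, b.2) * f (b.1, b.2))); last by case.
rewrite -(pair_bigA _ (fun a b => node_w i (a, b) * f (a, b))) !big_bool /= /node_w /=; ring.
Qed.

Lemma sum_node_w1 i : \sum_(b : bool * bool) node_w i b = 1.
Proof.
under eq_bigr do rewrite -[node_w _ _]mulr1.
by rewrite sum_node_w; ring.
Qed.

Lemma sum_slot_w1 : \sum_(x : slotT N) slot_w lam p x = 1.
Proof.
rewrite (eq_bigr (fun x : slotT N => \prod_(k < N) node_w k (x k))) //.
by rewrite -(bigA_distr_bigA node_w) big1 // => k _; apply: sum_node_w1.
Qed.

Lemma sum_slot_w_marginal i (f : bool * bool -> R) :
  \sum_(x : slotT N) slot_w lam p x * f (x i) = \sum_(b : bool * bool) node_w i b * f b.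
Proof.
pose g k b := node_w k b * (if k == i then f b else 1).
have gE (x : slotT N) : slot_w lam p x * f (x i) = \prod_(k < N) g k (x k).
  rewrite big_split /= [X in _ = _ * X](bigD1 i) //= eqxx.
  by rewrite [X in _ = _ * (_ * X)]big1 ?mulr1 // => k /negbTE ->.
rewrite (eq_bigr _ (fun x _ => gE x)) -(bigA_distr_bigA g) (bigD1 i) //=.
rewrite [X in _ * X]big1 ?mulr1 => [|k /negbTE ki].
  by apply: eq_bigr => b _; rewrite /g eqxx.
by rewrite /g ki; under eq_bigr do rewrite mulr1; apply: sum_node_w1.
Qed.

Definition expect t (g : seq (slotT N) -> R) : R :=
  \sum_(s : t.-tuple (slotT N)) path_w lam p s * g s.

Lemma path_w_ge0 s : 0 <= path_w lam p s.
Proof. by apply: prodr_ge0 => x _; apply: prodr_ge0 => k _; apply: node_w_ge0. Qed.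

Lemma expect0 g : expect 0 g = g [::].
Proof.
rewrite /expect (big_pred1 [tuple]) => [|u]; last by rewrite (tuple0 u) /= eqxx.
by rewrite /path_w big_nil mul1r.
Qed.

Lemma expectS t g :
  expect t.+1 g = expect t (fun s => \sum_(x : slotT N) slot_w lam p x * g (rcons s x)).
Proof.
rewrite /expect (sum_tuple_rcons _ (fun u => path_w lam p u * g u)); apply: eq_bigr => s _.
rewrite mulr_sumr; apply: eq_bigr => x _.
by rewrite /path_w -cats1 big_cat big_seq1 mulrA.
Qed.

Lemma eq_expect t g1 g2 :
  (forall s, size s = t -> g1 s = g2 s) -> expect t g1 = expect t g2.
Proof. by move=> g12; apply: eq_bigr => s _; rewrite g12 ?size_tuple. Qed.

Lemma ler_expect t g1 g2 :
  (forall s, size s = t -> g1 s <= g2 s) -> expect t g1 <= expect t g2.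
Proof.
by move=> g12; apply: ler_sum => s _; rewrite ler_wpM2l ?path_w_ge0 ?g12 ?size_tuple.
Qed.

Lemma expectD t g1 g2 : expect t (fun s => g1 s + g2 s) = expect t g1 + expect t g2.
Proof. by rewrite /expect -big_split; apply: eq_bigr => s _; rewrite mulrDr. Qed.

Lemma expectB t g1 g2 : expect t (fun s => g1 s - g2 s) = expect t g1 - expect t g2.
Proof. by rewrite /expect -sumrB; apply: eq_bigr => s _; rewrite mulrBr. Qed.

Lemma expectZ t c g : expect t (fun s => c * g s) = c * expect t g.
Proof. by rewrite /expect mulr_sumr; apply: eq_bigr => s _; rewrite mulrCA. Qed.

Lemma expect_sum t (I : Type) (r : seq I) (P : pred I) (G : I -> seq (slotT N) -> R) :
  expect t (fun s => \sum_(j <- r | P j) G j s) = \sum_(j <- r | P j) expect t (G j).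
Proof. by rewrite /expect exchange_big; apply: eq_bigr => s _; rewrite mulr_sumr. Qed.

Lemma expect_cst t c : expect t (fun _ => c) = c.
Proof.
elim: t => [|t IHt]; first by rewrite expect0.
rewrite expectS -[RHS]IHt; apply: eq_expect => s _.
by rewrite -mulr_suml sum_slot_w1 mul1r.
Qed.

Lemma expect_ge0 t g : (forall s, size s = t -> 0 <= g s) -> 0 <= expect t g.
Proof. by move=> g0; rewrite -(expect_cst t 0); apply: ler_expect. Qed.

Lemma expect_take t T g : (t <= T)%N -> expect T (fun s => g (take t s)) = expect t g.
Proof.
elim: T => [|T IHT]; first by rewrite leqn0 => /eqP->; apply: eq_expect => s /size0nil->.
rewrite leq_eqVlt => /orP[/eqP-> | tT].
  by apply: eq_expect => s sT; rewrite take_oversize ?sT.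
rewrite expectS -IHT //; apply: eq_expect => s sT.
by under eq_bigr do rewrite -cats1 takel_cat ?sT //; rewrite -mulr_suml sum_slot_w1 mul1r.
Qed.

Lemma loc_age_rcons (s : seq (slotT N)) x i :
  loc_age (rcons s x) i = if (x i).1 then 1%N else (loc_age s i).+1.
Proof. by rewrite /loc_age foldl_rcons. Qed.

Lemma loc_age_bounds (s : seq (slotT N)) i : (1 <= loc_age s i <= (size s).+1)%N.
Proof.
elim/last_ind: s => [|s x IHs] //; rewrite loc_age_rcons size_rcons.
by case: (x i).1 => //; case/andP: IHs => _; rewrite /= ltnS.
Qed.

Lemma sum_slot_w_loc_age (s : seq (slotT N)) i :
  \sum_(x : slotT N) slot_w lam p x * (loc_age (rcons s x) i)%:R =
    1 + (1 - lam i) * (loc_age s i)%:R.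
Proof.
under eq_bigr do rewrite loc_age_rcons.
rewrite (sum_slot_w_marginal i (fun b => (if b.1 then 1%N else (loc_age s i).+1)%:R)).
by rewrite sum_node_w /= -natr1; ring.
Qed.

Lemma expect_loc_age_le t i : 0 < lam i -> expect t (fun s => (loc_age s i)%:R) <= (lam i)^-1.
Proof.
move=> lam_gt0; have /andP[_ lam_le1] := lam01 i.
elim: t => [|t IHt]; first by rewrite expect0 invf_ge1.
rewrite expectS (eq_expect (g2 := fun s => 1 + (1 - lam i) * (loc_age s i)%:R)) => [|s _];
  last exact: sum_slot_w_loc_age.
rewrite expectD expect_cst expectZ.
apply: le_trans (_ : 1 + (1 - lam i) * (lam i)^-1 <= _).
  by rewrite lerD2l ler_wpM2l ?subr_ge0.
by rewrite mulrBl mul1r divff ?gt_eqF // addrC subrK.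
Qed.

Lemma belief_meanE (Hf : seq (slotT N) -> seq (obsT N)) t h i :
  belief_mean lam p Hf t h i =
  cond_mean (fun s : t.-tuple (slotT N) => path_w lam p s) (fun s => Hf s)
            (fun s => (loc_age s i)%:R) h.
Proof.
have sum_indicator (L : nat) : (1 <= L <= t.+1)%N ->
    \sum_(1 <= d < t.+2) (L == d)%:R * (d%:R : R) = L%:R.
  move=> L_range; under eq_bigr do rewrite eq_sym mulr_natl mulrb.
  by rewrite -big_mkcond big_nat1_eq ltnS L_range.
rewrite /belief_mean /belief /cond_mean; under eq_bigr do rewrite mulrAC.
rewrite -mulr_suml; congr (_ / _); under eq_bigr do rewrite mulr_suml.
rewrite exchange_big; apply: eq_bigr => s _; under eq_bigr do rewrite -mulrA.
by rewrite -mulr_sumr sum_indicator //; have := loc_age_bounds s i; rewrite size_tuple.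
Qed.

Lemma expect_belief_mean (Hf : seq (slotT N) -> seq (obsT N)) t i (phi : seq (obsT N) -> R) :
  expect t (fun s => phi (Hf s) * belief_mean lam p Hf t (Hf s) i) =
  expect t (fun s => phi (Hf s) * (loc_age s i)%:R).
Proof.
rewrite /expect; under eq_bigr do rewrite belief_meanE.
by apply: sum_cond_mean => s; apply: path_w_ge0.
Qed.

Section POMW.
Variables (beta : 'I_N -> R) (tb : nat -> seq (obsT N) -> ('I_N -> R) -> 'I_N).

Local Notation H t := (hist lam p beta tb t).

Definition scheduled t (s : seq (slotT N)) : 'I_N := pomw_decide lam p beta tb (H t) t (H t s).
Definition aoi t s i : R := (ap_age (H t s) i)%:R.
Definition lyapunov t s : R := \sum_(i < N) beta i * aoi t s i.
Definition pomw_gain t s : R := pomw_index lam p beta (H t) t (H t s) (scheduled t s).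

Lemma ap_age_rcons (h : seq (obsT N)) o i :
  ap_age (rcons h o) i = if (o.1.1 == i) && o.1.2 then o.2.+1 else (ap_age h i).+1.
Proof. by rewrite /ap_age foldl_rcons. Qed.

Lemma hist_rcons t s x : size s = t ->
  H t.+1 (rcons s x) = rcons (H t s)
    (scheduled t s, (x (scheduled t s)).2,
     if (x (scheduled t s)).2 then loc_age s (scheduled t s) else 0%N).
Proof.
move=> st /=; have -> : take t (rcons s x) = s by rewrite -cats1 take_size_cat.
by rewrite nth_rcons st ltnn eqxx.
Qed.

Lemma loc_age_le_ap_age s i : (loc_age s i <= ap_age (H (size s) s) i)%N.
Proof.
elim/last_ind: s => [|s x IHs] //.
rewrite size_rcons hist_rcons // ap_age_rcons loc_age_rcons /=.
case: (x i).1; first by case: ifP.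
by case: eqP => [->|] //=; case: (x i).2.
Qed.

Lemma sum_slot_w_aoi t s i : size s = t ->
  \sum_(x : slotT N) slot_w lam p x * aoi t.+1 (rcons s x) i =
    aoi t s i + 1 - (scheduled t s == i)%:R * p i * (aoi t s i - (loc_age s i)%:R).
Proof.
move=> st; rewrite /aoi; under eq_bigr do rewrite hist_rcons // ap_age_rcons /=.
have [<- | _] := eqVneq (scheduled t s) i; last first.
  by rewrite /= -mulr_suml sum_slot_w1 mul1r -natr1 !mul0r subr0.
set j := scheduled t s.
pose f (b : bool * bool) : R := (if b.2 then (loc_age s j).+1 else (ap_age (H t s) j).+1)%:R.
rewrite (eq_bigr (fun x => slot_w lam p x * f (x j))) => [|x _]; last by rewrite /f; case: (x j).2.
by rewrite (sum_slot_w_marginal j f) sum_node_w /f /= -!natr1; ring.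
Qed.

Lemma expect_gap_belief t i (phi : seq (obsT N) -> R) :
  expect t (fun s => phi (H t s) * (aoi t s i - belief_mean lam p (H t) t (H t s) i)) =
  expect t (fun s => phi (H t s) * (aoi t s i - (loc_age s i)%:R)).
Proof.
rewrite /expect; under eq_bigr do rewrite !mulrBr.
under [RHS]eq_bigr do rewrite !mulrBr.
by rewrite !sumrB; congr (_ - _); apply: expect_belief_mean.
Qed.

Lemma expect_pomw_gain t :
  expect t (pomw_gain t) = \sum_(i < N)
    expect t (fun s => (scheduled t s == i)%:R * beta i * p i * (aoi t s i - (loc_age s i)%:R)).
Proof.
rewrite (eq_expect (g2 := fun s => \sum_(i < N) (scheduled t s == i)%:R * beta i * p i *
           (aoi t s i - belief_mean lam p (H t) t (H t s) i))) => [|s _].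
  rewrite expect_sum; apply: eq_bigr => i _.
  exact: (expect_gap_belief t i
           (fun h => (pomw_decide lam p beta tb (H t) t h == i)%:R * beta i * p i)).
rewrite (bigD1 (scheduled t s)) //= eqxx mul1r big1 ?addr0 ?mulrA // => i.
by move/negbTE; rewrite eq_sym => ->; rewrite !mul0r.
Qed.

Lemma lyapunov_drift t :
  expect t.+1 (lyapunov t.+1) =
    expect t (lyapunov t) + \sum_(i < N) beta i - expect t (pomw_gain t).
Proof.
rewrite expectS expect_pomw_gain -expect_sum -(expect_cst t (\sum_(i < N) beta i)).
rewrite -expectD -expectB; apply: eq_expect => s st.
rewrite /lyapunov; under eq_bigr do rewrite mulr_sumr.
rewrite exchange_big /=; under eq_bigr do under eq_bigr do rewrite mulrCA.
under eq_bigr do rewrite -mulr_sumr sum_slot_w_aoi //.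
by rewrite -big_split -sumrB; apply: eq_bigr => i _ /=; ring.
Qed.

Lemma expect_gap_ge0 t i : 0 <= expect t (fun s => aoi t s i - (loc_age s i)%:R).
Proof. by apply: expect_ge0 => s <-; rewrite subr_ge0 ler_nat loc_age_le_ap_age. Qed.

Hypothesis tb_max : forall t h (f : 'I_N -> R) j, f j <= f (tb t h f).

Lemma pomw_gain_ge t k :
  beta k * p k * expect t (fun s => aoi t s k - (loc_age s k)%:R) <= expect t (pomw_gain t).
Proof.
rewrite -expectZ -(expect_gap_belief t k (fun _ => beta k * p k)).
by apply: ler_expect => s _; apply: tb_max.
Qed.

Section CostBound.
Variables (omega q : 'I_N -> R).
Hypothesis omega_gt0 : forall i, 0 < omega i.
Hypothesis lam_gt0 : forall i, 0 < lam i.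
Hypothesis p_gt0 : forall i, 0 < p i.
Hypothesis q_gt0 : forall i, 0 < q i.
Hypothesis q_sum : \sum_(i < N) q i / p i <= 1.
Hypothesis beta_def : forall i, beta i = omega i / (lam i * q i).
Hypothesis N_gt0 : (0 < N)%N.

Local Notation beta_sum := (\sum_(i < N) beta i).
Local Notation omega_lam_sum := (\sum_(i < N) omega i / lam i).

Lemma beta_ge0 i : 0 <= beta i.
Proof. by rewrite beta_def divr_ge0 // ltW // mulr_gt0. Qed.

Definition slot_cost t : R := \sum_(k < N) omega k * expect t (fun s => aoi t s k).

Lemma weighted_gap_le_gain t :
  \sum_(k < N) omega k / lam k * expect t (fun s => aoi t s k - (loc_age s k)%:R)
    <= expect t (pomw_gain t).
Proof.
have gap_ge0 k : 0 <= beta k * p k * expect t (fun s => aoi t s k - (loc_age s k)%:R).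
  exact: mulr_ge0 (mulr_ge0 (beta_ge0 k) (ltW (p_gt0 k))) (expect_gap_ge0 t k).
have omega_lamE k : omega k / lam k = q k / p k * (beta k * p k).
  by rewrite beta_def; field; rewrite !gt_eqF.
under eq_bigr do rewrite omega_lamE -mulrA.
apply: ler_subconvex_sum => [k | // | | k]; last exact: pomw_gain_ge.
  by rewrite divr_ge0 ?ltW.
exact: le_trans (gap_ge0 (Ordinal N_gt0)) (pomw_gain_ge _ _).
Qed.

Lemma slot_cost_le t : slot_cost t <= expect t (pomw_gain t) + omega_lam_sum.
Proof.
apply: le_trans (lerD (weighted_gap_le_gain t) (lexx _)).
rewrite /slot_cost -big_split /=; apply: ler_sum => k _.
have -> : expect t (fun s => aoi t s k) = expect t (fun s => aoi t s k - (loc_age s k)%:R)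
                                          + expect t (fun s => (loc_age s k)%:R).
  by rewrite -expectD; apply: eq_expect => s _; rewrite subrK.
have /andP[_ lam_le1] := lam01 k.
rewrite mulrDr lerD //; last by apply: ler_wpM2l; [exact: ltW | exact: expect_loc_age_le].
by rewrite ler_wpM2r ?expect_gap_ge0 // ler_pdivlMr // ler_piMr // ltW.
Qed.

Lemma cumulative_cost_le T :
  \sum_(0 <= t < T) slot_cost t <= beta_sum + T%:R * (beta_sum + omega_lam_sum).
Proof.
pose F t := expect t (lyapunov t).
have F0 : F 0%N = beta_sum by rewrite /F expect0; apply: eq_bigr => i _; rewrite mulr1.
have F_ge0 : 0 <= F T.
  by apply: expect_ge0 => s _; apply: sumr_ge0 => i _; rewrite mulr_ge0 ?beta_ge0.
apply: le_trans (_ : \sum_(0 <= t < T) (beta_sum + omega_lam_sum - (F t.+1 - F t)) <= _).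
  apply: ler_sum => t _; have := slot_cost_le t; rewrite /F lyapunov_drift; lra.
rewrite sumrB telescope_sumr // sumr_const_nat subn0 -mulr_natl; lra.
Qed.

Lemma pomw_cost_eq T : pomw_cost lam p beta tb omega T = \sum_(1 <= t < T.+1) slot_cost t.
Proof.
have -> : pomw_cost lam p beta tb omega T =
    expect T (fun s => \sum_(1 <= t < T.+1) \sum_(i < N) omega i * aoi t (take t s) i) by [].
rewrite expect_sum big_seq [RHS]big_seq; apply: eq_bigr => t.
rewrite mem_index_iota ltnS => /andP[_ tT]; rewrite expect_sum; apply: eq_bigr => i _.
by rewrite expectZ (expect_take (fun s => aoi t s i)).
Qed.

Lemma pomw_avg_le T : (0 < T)%N ->
  pomw_avg lam p beta tb omega T <=
    (beta_sum + T.+1%:R * (beta_sum + omega_lam_sum)) / (N%:R * T%:R).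
Proof.
move=> T_gt0; rewrite /pomw_avg ler_wpM2r ?invr_ge0 ?mulr_ge0 // pomw_cost_eq.
apply: le_trans (cumulative_cost_le T.+1); rewrite [X in _ <= X]big_ltn // lerDr.
apply: sumr_ge0 => k _; apply: mulr_ge0; first exact: ltW.
by apply: expect_ge0 => s _; apply: ler0n.
Qed.

Lemma pomw_avg_eventually_le u : 0 < u -> exists T0, forall T, (T0 <= T)%N ->
  pomw_avg lam p beta tb omega T <= (beta_sum + omega_lam_sum + u) / N%:R.
Proof.
move=> u_gt0; have beta_sum_ge0 : 0 <= beta_sum by apply: sumr_ge0 => i _; apply: beta_ge0.
have omega_lam_sum_ge0 : 0 <= omega_lam_sum by rewrite sumr_ge0 // => i _; rewrite divr_ge0 ?ltW.
pose K := (2 * beta_sum + omega_lam_sum) / u.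
have K_ge0 : 0 <= K by rewrite divr_ge0 ?(ltW u_gt0) // addr_ge0 ?mulr_ge0.
exists (Num.Def.archi_bound K).+1 => T T0T; have T_gt0 : (0 < T)%N by apply: leq_trans T0T.
apply: le_trans (pomw_avg_le T_gt0) _.
have : K < T%:R by apply: lt_le_trans (archi_boundP K_ge0) _; rewrite ler_nat ltnW.
rewrite ltr_pdivrMr // => K_lt.
rewrite ler_pdivrMr ?mulr_gt0 ?ltr0n //.
have -> : (beta_sum + omega_lam_sum + u) / N%:R * (N%:R * T%:R) =
          (beta_sum + omega_lam_sum + u) * T%:R by field; rewrite pnatr_eq0 -lt0n.
rewrite -natr1; nra.
Qed.

End CostBound.
End POMW.
End SlotProbability.

Section LamMin.
Variables (R : realType) (N : nat) (lam : 'I_N -> R).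
Hypothesis lam_gt0 : forall i, 0 < lam i.

Lemma lam_min_gt0 : 0 < lam_min lam.
Proof. by apply: (big_ind (fun x => 0 < x)) => // x y x_gt0 y_gt0; rewrite lt_min x_gt0. Qed.

Lemma lam_min_le i : lam_min lam <= lam i.
Proof. by rewrite /lam_min (bigD1 i) //= ge_min lexx. Qed.

Lemma sum_div_le_lam_min (a : 'I_N -> R) :
  (forall i, 0 <= a i) -> \sum_(i < N) a i / lam i <= (\sum_(i < N) a i) / lam_min lam.
Proof.
move=> a_ge0; rewrite mulr_suml; apply: ler_sum => i _.
by rewrite ler_wpM2l // lef_pV2 ?posrE ?lam_min_gt0 ?lam_min_le.
Qed.

End LamMin.

Lemma pomw_constant_lt_lb (R : realType) (N : nat) (omega lam q : 'I_N -> R) :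
  (0 < N)%N -> (forall i, 0 < omega i) -> (forall i, 0 < lam i) -> (forall i, 0 < q i) ->
  ((\sum_(i < N) omega i / (lam i * q i) + \sum_(i < N) omega i / lam i
    + (\sum_(i < N) omega i) / lam_min lam) / N%:R) / lb_obj omega q < 2 / lam_min lam.
Proof.
move=> N_gt0 omega_gt0 lam_gt0 q_gt0.
set lm := lam_min lam; set W := \sum_(i < N) omega i.
set S := \sum_(i < N) omega i * (q i)^-1.
have lm_gt0 : 0 < lm := lam_min_gt0 lam_gt0.
have W_gt0 : 0 < W := psumr_gt0 (Ordinal N_gt0) omega_gt0.
have omega_q_ge0 i : 0 <= omega i * (q i)^-1 by rewrite ltW // divr_gt0.
have S_ge0 : 0 <= S by apply: sumr_ge0.
have A_le : \sum_(i < N) omega i / (lam i * q i) <= S / lm.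
  under eq_bigr do rewrite invfM mulrA mulrAC.
  exact: sum_div_le_lam_min.
have B_le : \sum_(i < N) omega i / lam i <= W / lm.
  by apply: sum_div_le_lam_min => // i; apply: ltW.
have lbE : lb_obj omega q = (2 * N%:R)^-1 * (S + 3 * W).
  rewrite /lb_obj /S /W [3 * _]mulr_sumr -big_split; congr (_ * _); apply: eq_bigr => i _.
  by rewrite mulrDr [omega i * 3]mulrC.
have N_pos : 0 < N%:R :> R by rewrite ltr0n.
rewrite ltr_pdivrMr ?lbE ?mulr_gt0 ?invr_gt0 ?ltr_wpDl ?mulr_gt0 //.
have -> : 2 / lm * ((2 * N%:R)^-1 * (S + 3 * W)) = (S / lm + 3 * (W / lm)) / N%:R.
  by field; rewrite !gt_eqF.
rewrite ltr_pM2r ?invr_gt0 //.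
have : 0 < W / lm by rewrite divr_gt0.
lra.
Qed.

Theorem corollary2 (R : realType) (N : nat) (omega lam p qs : 'I_N -> R)
  (tb : nat -> seq (obsT N) -> ('I_N -> R) -> 'I_N) :
  (0 < N)%N ->
  (forall i, 0 < omega i) ->
  (forall i, 0 < lam i <= 1) ->
  (forall i, 0 < p i <= 1) ->
  lb_feasible lam p qs ->
  (forall q, lb_feasible lam p q -> lb_obj omega qs <= lb_obj omega q) ->
  (forall t h (f : 'I_N -> R) j, f j <= f (tb t h f)) ->
  exists c : R,
    c / lb_obj omega qs < 2 / lam_min lam /\
    exists T0 : nat, forall T : nat, (T0 <= T)%N ->
      pomw_avg lam p (fun i => omega i / (lam i * qs i)) tb omega T <= c.
Proof.
move=> N_gt0 omega_gt0 lam_range p_range [qs_gt0 [qs_sum _]] _ tb_max.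
have lam_gt0 i : 0 < lam i by case/andP: (lam_range i).
have p_gt0 i : 0 < p i by case/andP: (p_range i).
have lam01 i : 0 <= lam i <= 1 by case/andP: (lam_range i) => /ltW-> ->.
have p01 i : 0 <= p i <= 1 by case/andP: (p_range i) => /ltW-> ->.
eexists; split; first exact: pomw_constant_lt_lb.
apply: (pomw_avg_eventually_le lam01 p01 tb_max omega_gt0 lam_gt0 p_gt0 qs_gt0 qs_sum) => //.
by rewrite divr_gt0 ?lam_min_gt0 ?(psumr_gt0 (Ordinal N_gt0)).
Qed.
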